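(* For $w\in(0,\infty)$ let $$Q_{0,w}(x)=s_*\frac{w}{3+w}\frac{1}{r^3}\Big(e_r\otimes e_r-\tfrac13I\Big)+s_*\Big(1-\frac{w}{1+w}\frac1r\Big)\Big(e_z\otimes e_z-\tfrac13I\Big),\quad r=|x|>1,$$ and let $U_w=\{x\in\Omega\setminus\mathbb Re_z: Q_{0,w}(x)\text{ is uniaxial}\}$, where $\Omega=\{|x|>1\}$. If $w>\sqrt3$, then $$U_w=\{(x_1,x_2,0):x_1^2+x_2^2=r_w^2\},$$ where $r_w$ is the unique solution $r>1$ of $r^3-\frac{w}{1+w}r^2-\frac{w}{3+w}=0$. The function $w\mapsto r_w$ is increasing on $(\sqrt3,\infty)$, with $r_w\to1$ as $w\downarrow\sqrt3$ and $r_w\to r_\infty$ as $w\to\infty$, where $r_\infty>1$ is the root of $r^3-r^2-1=0$ ($r_\infty\approx1.47$). If $w\le\sqrt3$, then $U_w=\emptyset$.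
   Context: $s_*>0$ is a fixed constant, $e_r=x/|x|$, $e_z=(0,0,1)$. A matrix $Q\in\mathcal S_0$ (real symmetric traceless $3\times 3$) is uniaxial if it has two equal eigenvalues. *)

From Stdlib Require Import Reals Lra.
Open Scope R_scope.

(* 3x3 real matrices, indices 0,1,2 *)
Definition Mat3 := nat -> nat -> R.

Definition kron (i j : nat) : R := if Nat.eqb i j then 1 else 0.

Definition det3 (A : Mat3) : R :=
  A 0%nat 0%nat * (A 1%nat 1%nat * A 2%nat 2%nat - A 1%nat 2%nat * A 2%nat 1%nat)
  - A 0%nat 1%nat * (A 1%nat 0%nat * A 2%nat 2%nat - A 1%nat 2%nat * A 2%nat 0%nat)
  + A 0%nat 2%nat * (A 1%nat 0%nat * A 2%nat 1%nat - A 1%nat 1%nat * A 2%nat 0%nat).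

Definition charpoly3 (A : Mat3) (t : R) : R :=
  det3 (fun i j => t * kron i j - A i j).

(* uniaxial: two equal eigenvalues (counted with multiplicity), i.e. the
   characteristic polynomial has a repeated root *)
Definition uniaxial (A : Mat3) : Prop :=
  exists a b : R, forall t : R, charpoly3 A t = (t - a) ^ 2 * (t - b).

Definition vec3 (x1 x2 x3 : R) (i : nat) : R :=
  match i with 0%nat => x1 | 1%nat => x2 | _ => x3 end.

Definition ez (i : nat) : R := vec3 0 0 1 i.

Definition norm3 (x1 x2 x3 : R) : R := sqrt (x1 ^ 2 + x2 ^ 2 + x3 ^ 2).

Definition Q0 (s w x1 x2 x3 : R) : Mat3 :=
  let r := norm3 x1 x2 x3 in
  fun i j =>
    s * (w / (3 + w)) * (1 / r ^ 3)
      * ((vec3 x1 x2 x3 i / r) * (vec3 x1 x2 x3 j / r) - kron i j / 3)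
    + s * (1 - (w / (1 + w)) * (1 / r)) * (ez i * ez j - kron i j / 3).

Definition U (s w x1 x2 x3 : R) : Prop :=
  1 < norm3 x1 x2 x3 /\ ~ (x1 = 0 /\ x2 = 0) /\ uniaxial (Q0 s w x1 x2 x3).

Definition cubic_w (w r : R) : R := r ^ 3 - (w / (1 + w)) * r ^ 2 - w / (3 + w).

(* After scaling x to the unit vector u = x/|x|, Q_{0,w}(x) has the form
   a (u u^T - I/3) + b (e_z e_z^T - I/3) with a, b > 0.  Shifting by (a+b)/3,
   its characteristic polynomial is t (t^2 - (a+b) t + a b (u1^2 + u2^2)), so
   off the axis a repeated eigenvalue forces discriminant zero, i.e.
   (a - b)^2 + 4ab u3^2 = 0: u3 = 0 and a = b, and a = b is equivalent to
   cubic_w w |x| = 0.  On [1, oo) the cubic r^3 - p r^2 - q (p <= 1) has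
   slope at least 1; its value at 1 is (3 - w^2)/((1+w)(3+w)), which gives
   the threshold sqrt 3, a unique root r_w in (1, 2), its monotonicity in w
   (the cubic decreases in w) and both limits, by comparing values of the
   cubic with those at r = 1 and with r^3 - r^2 - 1. *)

From Stdlib Require Import Reals Lra Psatz ClassicalEpsilon FunctionalExtensionality.
Open Scope R_scope.

Definition cubic (p q r : R) : R := r ^ 3 - p * r ^ 2 - q.

Lemma cubic_wE w r : cubic_w w r = cubic (w / (1 + w)) (w / (3 + w)) r.
Proof. reflexivity. Qed.

Lemma cubic_sub_ge p q r1 r2 :
  p <= 1 -> 1 <= r1 -> r1 <= r2 -> r2 - r1 <= cubic p q r2 - cubic p q r1.
Proof.
  intros Hp H1 H12.
  assert (slope : 1 <= r1 ^ 2 + r1 * r2 + r2 ^ 2 - p * (r1 + r2)) by nra.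
  replace (cubic p q r2 - cubic p q r1)
    with ((r2 - r1) * (r1 ^ 2 + r1 * r2 + r2 ^ 2 - p * (r1 + r2)))
    by (unfold cubic; ring).
  nra.
Qed.

Lemma cubic_lt p q r1 r2 :
  p <= 1 -> 1 <= r1 -> r1 < r2 -> cubic p q r1 < cubic p q r2.
Proof. intros Hp H1 H12. pose proof (cubic_sub_ge p q r1 r2 Hp H1). lra. Qed.

Lemma cubic_dist_le p q r1 r2 :
  p <= 1 -> 1 <= r1 -> 1 <= r2 -> Rabs (r1 - r2) <= Rabs (cubic p q r1 - cubic p q r2).
Proof.
  intros Hp H1 H2. destruct (Rle_dec r1 r2) as [h|h].
  - pose proof (cubic_sub_ge p q r1 r2 Hp H1 h).
    rewrite (Rabs_left1 (r1 - r2)), Rabs_left1; lra.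
  - pose proof (cubic_sub_ge p q r2 r1 Hp H2 ltac:(lra)).
    rewrite (Rabs_right (r1 - r2)), Rabs_right; lra.
Qed.

Lemma cubic_root_unique p q r1 r2 :
  p <= 1 -> 1 <= r1 -> 1 <= r2 -> cubic p q r1 = 0 -> cubic p q r2 = 0 -> r1 = r2.
Proof.
  intros Hp H1 H2 C1 C2. destruct (Rtotal_order r1 r2) as [h|[h|h]]; [|exact h|].
  - pose proof (cubic_lt p q r1 r2 Hp H1 h). lra.
  - pose proof (cubic_lt p q r2 r1 Hp H2 h). lra.
Qed.

Lemma cubic_root_between p q :
  cubic p q 1 < 0 -> 0 < cubic p q 2 -> exists r, 1 < r < 2 /\ cubic p q r = 0.
Proof.
  intros H1 H2.
  destruct (IVT (cubic p q) 1 2) as [r [[Hr1 Hr2] Hr]]; try lra.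
  { intro x. unfold cubic. reg. }
  exists r. split; [|exact Hr].
  split; apply Rnot_le_lt; intro; [replace r with 1 in Hr | replace r with 2 in Hr]; lra.
Qed.

Lemma div_add_pos_lt1 c w : 0 < c -> 0 < w -> 0 < w / (c + w) < 1.
Proof.
  intros Hc Hw. split.
  - apply Rdiv_lt_0_compat; lra.
  - apply (Rmult_lt_reg_r (c + w)); [lra|]. field_simplify; lra.
Qed.

Lemma div_add_increasing c w1 w2 :
  0 < c -> 0 < w1 -> w1 < w2 -> w1 / (c + w1) < w2 / (c + w2).
Proof.
  intros Hc H1 H12.
  apply (Rmult_lt_reg_r ((c + w1) * (c + w2))); [apply Rmult_lt_0_compat; lra|].
  replace (w1 / (c + w1) * ((c + w1) * (c + w2))) with (w1 * (c + w2)) by (field; lra).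
  replace (w2 / (c + w2) * ((c + w1) * (c + w2))) with (w2 * (c + w1)) by (field; lra).
  nra.
Qed.

Lemma cubic_w_lt w r1 r2 : 0 < w -> 1 <= r1 -> r1 < r2 -> cubic_w w r1 < cubic_w w r2.
Proof.
  intros Hw. rewrite !cubic_wE. apply cubic_lt.
  pose proof (div_add_pos_lt1 1 w). lra.
Qed.

Lemma cubic_w_root_unique w r1 r2 :
  0 < w -> 1 <= r1 -> 1 <= r2 -> cubic_w w r1 = 0 -> cubic_w w r2 = 0 -> r1 = r2.
Proof.
  intros Hw. rewrite !cubic_wE. apply cubic_root_unique.
  pose proof (div_add_pos_lt1 1 w). lra.
Qed.

Lemma cubic_w_decreasing_in_w w1 w2 r :
  0 < w1 -> w1 < w2 -> 0 < r -> cubic_w w2 r < cubic_w w1 r.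
Proof.
  intros H1 H12 Hr. unfold cubic_w.
  pose proof (div_add_increasing 1 w1 w2 ltac:(lra) H1 H12).
  pose proof (div_add_increasing 3 w1 w2 ltac:(lra) H1 H12).
  nra.
Qed.

Lemma cubic_w_1 w : 0 < w -> cubic_w w 1 = (3 - w ^ 2) / ((1 + w) * (3 + w)).
Proof. intro Hw. unfold cubic_w. field. lra. Qed.

Lemma sqrt3_bounds : 0 < sqrt 3 < 2 /\ sqrt 3 * sqrt 3 = 3.
Proof.
  pose proof (sqrt_sqrt 3 ltac:(lra)). pose proof (sqrt_lt_R0 3 ltac:(lra)). nra.
Qed.

Lemma cubic_w_1_neg w : sqrt 3 < w -> cubic_w w 1 < 0.
Proof.
  intro Hw. pose proof sqrt3_bounds. rewrite cubic_w_1 by lra.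
  apply Rdiv_neg_pos; nra.
Qed.

Lemma cubic_w_pos w r : 0 < w -> w <= sqrt 3 -> 1 < r -> 0 < cubic_w w r.
Proof.
  intros Hw Hle Hr. pose proof sqrt3_bounds.
  assert (0 <= cubic_w w 1).
  { rewrite cubic_w_1 by lra. apply Rle_mult_inv_pos; [nra | apply Rmult_lt_0_compat; lra]. }
  pose proof (cubic_w_lt w 1 r Hw ltac:(lra) Hr). lra.
Qed.

(* For w <= sqrt 3 there is no such root and [r_w w] is an unspecified real. *)
Definition r_w (w : R) : R := epsilon (inhabits 0) (fun r => 1 < r /\ cubic_w w r = 0).

Lemma r_w_spec w : sqrt 3 < w -> 1 < r_w w < 2 /\ cubic_w w (r_w w) = 0.
Proof.
  intro Hw. pose proof sqrt3_bounds. assert (Hw0 : 0 < w) by lra.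
  assert (H2 : 0 < cubic_w w 2).
  { pose proof (div_add_pos_lt1 1 w). pose proof (div_add_pos_lt1 3 w).
    unfold cubic_w. lra. }
  rewrite cubic_wE in H2.
  destruct (cubic_root_between _ _ (cubic_w_1_neg w Hw) H2) as [r [Hr Hroot]].
  rewrite <- cubic_wE in Hroot.
  destruct (epsilon_spec (inhabits 0) (fun r => 1 < r /\ cubic_w w r = 0)
              (ex_intro _ r (conj (proj1 Hr) Hroot))) as [H1 Hrw].
  fold (r_w w) in H1, Hrw.
  rewrite (cubic_w_root_unique w (r_w w) r) by lra. lra.
Qed.

Definition axisym (a b u1 u2 u3 : R) : Mat3 := fun i j =>
  a * (vec3 u1 u2 u3 i * vec3 u1 u2 u3 j - kron i j / 3) + b * (ez i * ez j - kron i j / 3).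

Lemma charpoly3_axisym a b u1 u2 u3 t :
  u1 ^ 2 + u2 ^ 2 + u3 ^ 2 = 1 ->
  charpoly3 (axisym a b u1 u2 u3) (t - (a + b) / 3) =
  t ^ 3 - (a + b) * t ^ 2 + a * b * (u1 ^ 2 + u2 ^ 2) * t.
Proof.
  intro Hu.
  transitivity (t ^ 3 - (a * (u1 ^ 2 + u2 ^ 2 + u3 ^ 2) + b) * t ^ 2
                + a * b * (u1 ^ 2 + u2 ^ 2) * t).
  - unfold charpoly3, det3, axisym, ez, kron; simpl. field.
  - rewrite Hu. ring.
Qed.

Lemma monic_cubic_coeffs_eq c2 c1 c0 d2 d1 d0 :
  (forall x, x ^ 3 + c2 * x ^ 2 + c1 * x + c0 = x ^ 3 + d2 * x ^ 2 + d1 * x + d0) ->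
  c2 = d2 /\ c1 = d1 /\ c0 = d0.
Proof.
  intro H. pose proof (H 0). pose proof (H 1). pose proof (H (-1)). simpl in *. lra.
Qed.

Lemma double_root_discr c d A B :
  0 < d -> (forall x, x ^ 3 - c * x ^ 2 + d * x = (x - A) ^ 2 * (x - B)) -> c ^ 2 = 4 * d.
Proof.
  intros Hd H.
  destruct (monic_cubic_coeffs_eq (- c) d 0 (- (2 * A + B)) (A ^ 2 + 2 * A * B) (- (A ^ 2 * B)))
    as [Hc [HdAB HAB]].
  { intro x. transitivity ((x - A) ^ 2 * (x - B)); [rewrite <- H |]; ring. }
  assert (HB : B = 0).
  { destruct (Rmult_integral (A ^ 2) B ltac:(lra)) as [HA|HB]; [|exact HB].
    assert (A = 0) by nra. subst A. lra. }
  subst B. nra.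
Qed.

Lemma uniaxial_axisym a b u1 u2 u3 :
  0 < a -> 0 < b -> u1 ^ 2 + u2 ^ 2 + u3 ^ 2 = 1 -> 0 < u1 ^ 2 + u2 ^ 2 ->
  uniaxial (axisym a b u1 u2 u3) <-> u3 = 0 /\ a = b.
Proof.
  intros Ha Hb Hu Hoff. unfold uniaxial. split.
  - intros [al [be Hchar]].
    assert (Hdiscr : (a + b) ^ 2 = 4 * (a * b * (u1 ^ 2 + u2 ^ 2))).
    { apply (double_root_discr _ _ (al + (a + b) / 3) (be + (a + b) / 3)).
      - apply Rmult_lt_0_compat; [apply Rmult_lt_0_compat|]; assumption.
      - intro x. rewrite <- charpoly3_axisym with (u3 := u3) by exact Hu.
        rewrite Hchar. ring. }
    assert (Hab : 0 < a * b) by (apply Rmult_lt_0_compat; assumption).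
    assert (Hsum : (a - b) ^ 2 + 4 * (a * b * u3 ^ 2) = 0).
    { replace (u1 ^ 2 + u2 ^ 2) with (1 - u3 ^ 2) in Hdiscr by lra. lra. }
    pose proof (pow2_ge_0 (a - b)). pose proof (pow2_ge_0 u3).
    assert (Hu3 : u3 ^ 2 = 0).
    { destruct (Rmult_integral (a * b) (u3 ^ 2) ltac:(nra)) as [Hab0|Hu0]; lra. }
    split.
    + simpl in Hu3. rewrite Rmult_1_r in Hu3.
      destruct (Rmult_integral u3 u3 Hu3); assumption.
    + nra.
  - intros [H3 Hab]. subst u3 b. exists (a / 3), (- (2 * a / 3)). intro t.
    replace t with ((t + 2 * a / 3) - (a + a) / 3) at 1 by field.
    rewrite charpoly3_axisym by exact Hu.
    replace (u1 ^ 2 + u2 ^ 2) with 1 by (rewrite <- Hu; ring). field.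
Qed.

Lemma Q0_axisym s w x1 x2 x3 :
  let r := norm3 x1 x2 x3 in
  Q0 s w x1 x2 x3 =
  axisym (s * (w / (3 + w)) * (1 / r ^ 3)) (s * (1 - w / (1 + w) * (1 / r)))
    (x1 / r) (x2 / r) (x3 / r).
Proof.
  intro r. extensionality i. extensionality j. unfold Q0, axisym. fold r.
  destruct i as [|[|i]], j as [|[|j]]; reflexivity.
Qed.

Lemma norm3_sqr x1 x2 x3 : norm3 x1 x2 x3 ^ 2 = x1 ^ 2 + x2 ^ 2 + x3 ^ 2.
Proof. unfold norm3. rewrite pow2_sqrt; [reflexivity | nra]. Qed.

Lemma off_axis_pos x1 x2 : ~ (x1 = 0 /\ x2 = 0) -> 0 < x1 ^ 2 + x2 ^ 2.
Proof.
  intro H. destruct (Req_dec x1 0); destruct (Req_dec x2 0); try tauto; nra.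
Qed.

Lemma Q0_coeffs_sub s w r :
  0 < w -> 0 < r ->
  s * (1 - w / (1 + w) * (1 / r)) - s * (w / (3 + w)) * (1 / r ^ 3)
  = s / r ^ 3 * cubic_w w r.
Proof. intros Hw Hr. unfold cubic_w. field. repeat split; lra. Qed.

Lemma uniaxial_Q0 s w x1 x2 x3 :
  0 < s -> 0 < w -> 1 < norm3 x1 x2 x3 -> ~ (x1 = 0 /\ x2 = 0) ->
  uniaxial (Q0 s w x1 x2 x3) <-> x3 = 0 /\ cubic_w w (norm3 x1 x2 x3) = 0.
Proof.
  intros Hs Hw. rewrite Q0_axisym. set (r := norm3 x1 x2 x3). intros Hr Hoff.
  pose proof (div_add_pos_lt1 1 w ltac:(lra) Hw).
  pose proof (div_add_pos_lt1 3 w ltac:(lra) Hw).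
  assert (Hr3 : 0 < r ^ 3) by (apply pow_lt; lra).
  assert (Hinv : 0 < 1 / r < 1).
  { split; [apply Rdiv_lt_0_compat; lra |].
    apply (Rmult_lt_reg_r r); [lra |]. field_simplify; lra. }
  assert (Hx3 : x3 / r = 0 <-> x3 = 0).
  { split; intro E; [| rewrite E; field; lra].
    replace x3 with (x3 / r * r) by (field; lra). rewrite E. ring. }
  assert (Hab : s * (w / (3 + w)) * (1 / r ^ 3) = s * (1 - w / (1 + w) * (1 / r))
                <-> cubic_w w r = 0).
  { pose proof (Q0_coeffs_sub s w r Hw ltac:(lra)) as E.
    assert (0 < s / r ^ 3) by (apply Rdiv_lt_0_compat; lra).
    split; intro Heq.
    - rewrite Heq, Rminus_diag in E. symmetry in E.
      destruct (Rmult_integral _ _ E); lra.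
    - rewrite Heq, Rmult_0_r in E. lra. }
  rewrite uniaxial_axisym, Hx3, Hab; [tauto | | | |].
  - apply Rmult_lt_0_compat; [apply Rmult_lt_0_compat | apply Rdiv_lt_0_compat]; lra.
  - apply Rmult_lt_0_compat; nra.
  - replace ((x1 / r) ^ 2 + (x2 / r) ^ 2 + (x3 / r) ^ 2)
      with ((x1 ^ 2 + x2 ^ 2 + x3 ^ 2) / r ^ 2) by (field; lra).
    unfold r. rewrite <- norm3_sqr. field. fold r. lra.
  - replace ((x1 / r) ^ 2 + (x2 / r) ^ 2) with ((x1 ^ 2 + x2 ^ 2) / r ^ 2) by (field; lra).
    apply Rdiv_lt_0_compat; [apply off_axis_pos, Hoff | apply pow_lt; lra].
Qed.

Lemma U_iff_circle s w x1 x2 x3 :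
  0 < s -> sqrt 3 < w -> U s w x1 x2 x3 <-> x3 = 0 /\ x1 ^ 2 + x2 ^ 2 = r_w w ^ 2.
Proof.
  intros Hs Hw. destruct sqrt3_bounds as [[Hs3 Hs3'] Hs3sq].
  destruct (r_w_spec w Hw) as [Hrw Hroot]. unfold U. split.
  - intros [Hr [Hoff Huni]].
    rewrite uniaxial_Q0 in Huni by (auto; lra). destruct Huni as [H3 Hc]. subst x3.
    assert (Hn : norm3 x1 x2 0 = r_w w)
      by (apply (cubic_w_root_unique w); lra || assumption).
    rewrite <- Hn.
    rewrite norm3_sqr. split; [reflexivity | ring].
  - intros [H3 H12]. subst x3.
    assert (Hn : norm3 x1 x2 0 = r_w w).
    { rewrite <- (sqrt_pow2 (r_w w)) by lra. unfold norm3. f_equal. rewrite <- H12. ring. }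
    assert (Hoff : ~ (x1 = 0 /\ x2 = 0)) by (intros [-> ->]; nra).
    rewrite uniaxial_Q0 by (rewrite ?Hn; auto; lra). rewrite Hn. tauto.
Qed.

Lemma U_empty s w x1 x2 x3 : 0 < s -> 0 < w -> w <= sqrt 3 -> ~ U s w x1 x2 x3.
Proof.
  intros Hs Hw Hle [Hr [Hoff Huni]].
  rewrite uniaxial_Q0 in Huni by assumption. destruct Huni as [_ Hc].
  pose proof (cubic_w_pos w _ Hw Hle Hr). lra.
Qed.

Lemma r_w_increasing w1 w2 : sqrt 3 < w1 -> w1 < w2 -> r_w w1 < r_w w2.
Proof.
  intros H1 H12. destruct sqrt3_bounds as [[Hs3 Hs3'] Hs3sq].
  destruct (r_w_spec w1 H1) as [[R1 _] C1]. destruct (r_w_spec w2 ltac:(lra)) as [[R2 _] C2].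
  pose proof (cubic_w_decreasing_in_w w1 w2 (r_w w1) ltac:(lra) H12 ltac:(lra)).
  apply Rnot_le_lt. intro Hle.
  destruct (Rle_lt_or_eq_dec _ _ Hle) as [Hlt|Heq].
  - pose proof (cubic_w_lt w2 (r_w w2) (r_w w1) ltac:(lra) ltac:(lra) Hlt). lra.
  - rewrite Heq in C2. lra.
Qed.

Lemma r_w_sub_1_le w : sqrt 3 < w -> r_w w - 1 <= w ^ 2 - 3.
Proof.
  intro Hw. destruct sqrt3_bounds as [[Hs3 Hs3'] Hs3sq]. destruct (r_w_spec w Hw) as [Hrw Hroot].
  pose proof (div_add_pos_lt1 1 w ltac:(lra) ltac:(lra)).
  pose proof (cubic_sub_ge (w / (1 + w)) (w / (3 + w)) 1 (r_w w)
                ltac:(lra) ltac:(lra) ltac:(lra)) as Hsub.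
  rewrite <- !cubic_wE, Hroot, cubic_w_1 in Hsub by lra.
  assert (Hgt : 0 < w ^ 2 - 3) by nra.
  assert (Hden : 1 <= (1 + w) * (3 + w)) by nra.
  assert ((w ^ 2 - 3) / ((1 + w) * (3 + w)) <= w ^ 2 - 3).
  { apply (Rmult_le_reg_r ((1 + w) * (3 + w))); [lra|].
    field_simplify; [nra | lra]. }
  replace (0 - (3 - w ^ 2) / ((1 + w) * (3 + w))) with ((w ^ 2 - 3) / ((1 + w) * (3 + w)))
    in Hsub by (field; lra).
  lra.
Qed.

Lemma r_w_cvg_1 eps :
  0 < eps -> exists delta, 0 < delta /\
    forall w, sqrt 3 < w < sqrt 3 + delta -> Rabs (r_w w - 1) < eps.
Proof.
  intro Heps. destruct sqrt3_bounds as [[Hs3 Hs3'] Hs3sq].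
  exists (Rmin 1 (eps / 5)). split; [apply Rmin_pos; lra |].
  intros w [Hw1 Hw2]. pose proof (Rmin_l 1 (eps / 5)). pose proof (Rmin_r 1 (eps / 5)).
  destruct (r_w_spec w Hw1) as [Hrw _]. pose proof (r_w_sub_1_le w Hw1).
  (* [w^2 - 3 = (w - sqrt 3)(w + sqrt 3) < 5 (w - sqrt 3)] *)
  assert (w ^ 2 - 3 < 5 * (w - sqrt 3)) by nra.
  rewrite Rabs_pos_eq; lra.
Qed.

Lemma cubic_1_1_root_unique :
  exists ri, 1 < ri /\ ri ^ 3 - ri ^ 2 - 1 = 0 /\
    forall r, r ^ 3 - r ^ 2 - 1 = 0 -> r = ri.
Proof.
  assert (Hgt1 : forall r, cubic 1 1 r = 0 -> 1 < r).
  { unfold cubic. intros r Hr. apply Rnot_le_lt. intro Hle.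
    pose proof (pow2_ge_0 r). assert (r ^ 2 * (r - 1) <= 0) by nra. nra. }
  destruct (cubic_root_between 1 1) as [ri [Hri Hroot]]; [unfold cubic; lra .. |].
  exists ri. split; [lra | split].
  - unfold cubic in Hroot. lra.
  - intros r Hr.
    assert (Hc : cubic 1 1 r = 0) by (unfold cubic; lra).
    pose proof (Hgt1 r Hc).
    apply (cubic_root_unique 1 1); [lra | lra | lra | exact Hc | exact Hroot].
Qed.

Lemma r_w_dist_le ri w :
  ri ^ 3 - ri ^ 2 - 1 = 0 -> 1 <= ri -> sqrt 3 < w -> Rabs (r_w w - ri) <= 7 / w.
Proof.
  intros Hri H1 Hw. destruct sqrt3_bounds as [[Hs3 Hs3'] Hs3sq].
  destruct (r_w_spec w Hw) as [Hrw Hroot].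
  set (r := r_w w) in *.
  assert (Hc : cubic 1 1 r = - (r ^ 2 / (1 + w) + 3 / (3 + w))).
  { assert (cubic_w w r - cubic 1 1 r = r ^ 2 / (1 + w) + 3 / (3 + w))
      by (unfold cubic_w, cubic; field; split; lra).
    lra. }
  pose proof (cubic_dist_le 1 1 r ri ltac:(lra) ltac:(lra) H1) as D.
  replace (cubic 1 1 ri) with 0 in D by (unfold cubic; lra).
  rewrite Hc, Rminus_0_r, Rabs_Ropp, (Rabs_pos_eq (r ^ 2 / (1 + w) + 3 / (3 + w))) in D.
  - apply (Rle_trans _ _ _ D).
    assert (r ^ 2 / (1 + w) <= 4 / w).
    { unfold Rdiv. apply Rmult_le_compat; try nra.
      - apply Rlt_le, Rinv_0_lt_compat. lra.
      - apply Rinv_le_contravar; lra. }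
    assert (3 / (3 + w) <= 3 / w).
    { unfold Rdiv. apply Rmult_le_compat_l; [lra |]. apply Rinv_le_contravar; lra. }
    replace (7 / w) with (4 / w + 3 / w) by (field; lra). lra.
  - apply Rplus_le_le_0_compat; apply Rlt_le, Rdiv_lt_0_compat; nra.
Qed.

Lemma r_w_cvg_inf ri :
  ri ^ 3 - ri ^ 2 - 1 = 0 -> 1 <= ri ->
  forall eps, 0 < eps -> exists M, forall w, M < w -> Rabs (r_w w - ri) < eps.
Proof.
  intros Hri H1 eps Heps. destruct sqrt3_bounds as [[Hs3 _] _].
  exists (Rmax (sqrt 3) (7 / eps)). intros w Hw.
  pose proof (Rmax_l (sqrt 3) (7 / eps)). pose proof (Rmax_r (sqrt 3) (7 / eps)).
  apply (Rle_lt_trans _ (7 / w)); [apply r_w_dist_le; lra |].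
  apply (Rmult_lt_reg_r w); [lra |].
  replace (7 / w * w) with 7 by (field; lra).
  replace 7 with (7 / eps * eps) at 1 by (field; lra).
  rewrite (Rmult_comm eps w). apply Rmult_lt_compat_r; lra.
Qed.

Theorem proposition3p1 (s : R) (hs : 0 < s) :
  (exists rw : R -> R,
     (forall w : R, sqrt 3 < w ->
        1 < rw w /\ cubic_w w (rw w) = 0 /\
        (forall r : R, 1 < r -> cubic_w w r = 0 -> r = rw w) /\
        (forall x1 x2 x3 : R,
           U s w x1 x2 x3 <-> (x3 = 0 /\ x1 ^ 2 + x2 ^ 2 = (rw w) ^ 2))) /\
     (forall w1 w2 : R, sqrt 3 < w1 -> w1 < w2 -> rw w1 < rw w2) /\
     (forall eps : R, 0 < eps -> exists delta : R, 0 < delta /\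
        forall w : R, sqrt 3 < w < sqrt 3 + delta -> Rabs (rw w - 1) < eps) /\
     (exists rinf : R, 1 < rinf /\ rinf ^ 3 - rinf ^ 2 - 1 = 0 /\
        (forall r : R, r ^ 3 - r ^ 2 - 1 = 0 -> r = rinf) /\
        (forall eps : R, 0 < eps -> exists M : R,
           forall w : R, M < w -> Rabs (rw w - rinf) < eps))) /\
  (forall w : R, 0 < w -> w <= sqrt 3 ->
     forall x1 x2 x3 : R, ~ U s w x1 x2 x3).
Proof.
  split; [| intros w Hw Hle x1 x2 x3; exact (U_empty s w x1 x2 x3 hs Hw Hle)].
  exists r_w. split; [| split; [exact r_w_increasing | split; [exact r_w_cvg_1 |]]].
  - intros w Hw. destruct (r_w_spec w Hw) as [Hrw Hroot].
    pose proof sqrt3_bounds.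
    split; [lra | split; [exact Hroot | split]].
    + intros r Hr Hc. apply (cubic_w_root_unique w); lra || assumption.
    + intros x1 x2 x3. exact (U_iff_circle s w x1 x2 x3 hs Hw).
  - destruct cubic_1_1_root_unique as [ri [Hri [Hroot Huniq]]].
    exists ri. split; [exact Hri | split; [exact Hroot | split; [exact Huniq |]]].
    apply r_w_cvg_inf; lra.
Qed.
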